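(* Let $\mathcal{G}$ be a finite groupoid and let $\mathcal{H}$ and $\mathcal{K}$ be connected wide subgroupoids of $\mathcal{G}$. Then \[|\mathcal{H}\backslash\mathcal{G}/\mathcal{K}|=\langle \chi_{\mathrm{Ind}^\mathcal{G}_\mathcal{H}\mathrm{Tri}},\ \chi_{\mathrm{Ind}^\mathcal{G}_\mathcal{K}\mathrm{Tri}}\rangle.\]
   Context: A groupoid is a category in which every morphism is invertible; all groupoids are finite and nonempty; $\mathcal{C}_0,\mathcal{C}_1$ denote objects and morphisms, $\mathcal{C}_x:=\mathcal{C}(x,x)$ the isotropy group, and $gg'$ the composite $g\circ g'$. A subgroupoid is wide if it contains all objects, connected if any two of its objects are joined by one of its morphisms. For subgroupoids $\mathcal{H},\mathcal{K}$ and $g\in\mathcal{G}_1$, $\mathcal{H}g\mathcal{K}:=\{hgk\mid h\in\mathcal{H}_1,k\in\mathcal{K}_1,\mathrm{dom}\,h=\mathrm{cod}\,g,\mathrm{cod}\,k=\mathrm{dom}\,g\}$, and $\mathcal{H}\backslash\mathcal{G}/\mathcal{K}$ is the set of all such double cosets. A linear representation of a groupoid $\mathcal{C}$ is a functor $\mathcal{C}\to\mathbf{vect}$ (finite-dimensional complex vector spaces). $\mathrm{Tri}:\mathcal{H}\to\mathbf{vect}$ is the trivial representation ($x\mapsto\mathbb{C}$, every morphism $\mapsto\mathrm{id}_\mathbb{C}$). $\mathrm{Ind}^\mathcal{G}_\mathcal{H}:\mathbf{vect}^\mathcal{H}\to\mathbf{vect}^\mathcal{G}$ is the left adjoint of restriction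 along the inclusion $\mathcal{H}\hookrightarrow\mathcal{G}$ (left Kan extension along the inclusion). For a representation $R$ of $\mathcal{G}$ with representation space $V=\bigoplus_{x\in\mathcal{G}_0}R(x)$, and a morphism $g:x\to y$, let $\hat R(g):V\to V$ be the linear map that is $R(g):R(x)\to R(y)$ on the summand $R(x)$ and zero on the other summands; the character is $\chi_R:\mathcal{G}_1\to\mathbb{C}$, $\chi_R(g):=\mathrm{tr}(\hat R(g))$. The inner product of characters is $\langle\chi_R,\chi_{R'}\rangle:=\frac{1}{|\mathcal{G}_0|}\sum_{x\in\mathcal{G}_0}\langle\chi_R|_{\mathcal{G}_x},\chi_{R'}|_{\mathcal{G}_x}\rangle$, where for functions on the group $\mathcal{G}_x$, $\langle\alpha,\beta\rangle=\frac{1}{|\mathcal{G}_x|}\sum_{g\in\mathcal{G}_x}\alpha(g)\overline{\beta(g)}$. *)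

From HB Require Import structures.
From mathcomp Require Import all_boot all_order all_algebra.
Set Implicit Arguments. Unset Strict Implicit. Unset Printing Implicit Defensive.
Import Order.TTheory GRing.Theory Num.Theory.
Local Open Scope ring_scope.

Record groupoid := Groupoid {
  obj : finType;
  ghom : obj -> obj -> finType;
  gcomp : forall x y z, ghom y z -> ghom x y -> ghom x z;
  gid : forall x, ghom x x;
  ginv : forall x y, ghom x y -> ghom y x;
  gcompA : forall x y z w (h : ghom z w) (g : ghom y z) (f : ghom x y),
      gcomp h (gcomp g f) = gcomp (gcomp h g) f;
  gcomp1g : forall x y (f : ghom x y), gcomp (gid y) f = f;
  gcompg1 : forall x y (f : ghom x y), gcomp f (gid x) = f;
  gcompVg : forall x y (f : ghom x y), gcomp (ginv f) f = gid x;
  gcompgV : forall x y (f : ghom x y), gcomp f (ginv f) = gid y;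
  obj_nonempty : (0 < #|obj|)%N
}.

Arguments ghom : clear implicits.
Arguments gcomp {G x y z} g f : rename.
Arguments gid {G} x : rename.
Arguments ginv {G x y} f : rename.

Section Groupoids.
Variable G : groupoid.

Definition mor := {p : obj G * obj G & ghom G p.1 p.2}.
Definition mkmor x y (g : ghom G x y) : mor := @Tagged _ (x, y) (fun p => ghom G p.1 p.2) g.

Definition is_subgroupoid (O : {set obj G}) (H : forall x y, {set ghom G x y}) :=
  [/\ (forall x y (g : ghom G x y), g \in H x y -> x \in O /\ y \in O),
      (forall x, x \in O -> gid x \in H x x),
      (forall x y z (g : ghom G y z) (f : ghom G x y),
          g \in H y z -> f \in H x y -> gcomp g f \in H x z) &
      (forall x y (f : ghom G x y), f \in H x y -> ginv f \in H y x)].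

Definition wide (O : {set obj G}) := O = [set: obj G].

Definition connected (O : {set obj G}) (H : forall x y, {set ghom G x y}) :=
  forall x y, x \in O -> y \in O -> exists g : ghom G x y, g \in H x y.

Definition dcoset (H K : forall x y, {set ghom G x y}) x y (g : ghom G x y) : {set mor} :=
  [set u : mor | [exists z : obj G, exists w : obj G,
     exists h : ghom G y z, exists k : ghom G w x,
       [&& h \in H y z, k \in K w x & u == mkmor (gcomp h (gcomp g k))]]].

Definition dcoset_of (H K : forall x y, {set ghom G x y}) (u : mor) : {set mor} :=
  dcoset H K (tagged u).

Definition double_cosets (H K : forall x y, {set ghom G x y}) : {set {set mor}} :=
  [set dcoset_of H K u | u : mor].

Variable C : numClosedFieldType.

(* A linear representation of G: a functor G -> vect, with R(x) = C^(rdim x)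
   (row vectors) and R(g) : C^(rdim x) -> C^(rdim y), v |-> v *m rmat g. *)
Record rep := Rep {
  rdim : obj G -> nat;
  rmat : forall x y, ghom G x y -> 'M[C]_(rdim x, rdim y)
}.

Definition is_functor (R : rep) :=
  (forall x, rmat R (gid x) = 1%:M) /\
  (forall x y z (g : ghom G y z) (f : ghom G x y),
      rmat R (gcomp g f) = rmat R f *m rmat R g).

Definition is_natural (R S : rep) (t : forall x, 'M[C]_(rdim R x, rdim S x)) :=
  forall x y (g : ghom G x y), rmat R g *m t y = t x *m rmat S g.

Definition Tri_mat : 'M[C]_1 := 1%:M.

Definition is_natural_TriRes (H : forall x y, {set ghom G x y}) (W : rep)
    (t : forall x, 'M[C]_(1, rdim W x)) :=
  forall x y (h : ghom G x y), h \in H x y -> Tri_mat *m t y = t x *m rmat W h.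

(* (I, eta) is Ind^G_H Tri: a representation I of G with a universal arrow
   eta : Tri ==> Res^G_H I, i.e. the value at Tri of the left adjoint of
   restriction (determined up to isomorphism by this universal property). *)
Definition is_Ind_Tri (H : forall x y, {set ghom G x y}) (I : rep)
    (eta : forall x, 'M[C]_(1, rdim I x)) :=
  [/\ is_functor I, is_natural_TriRes H eta &
      forall W : rep, is_functor W ->
      forall psi : forall x, 'M[C]_(1, rdim W x), is_natural_TriRes H psi ->
      exists! theta : forall x, 'M[C]_(rdim I x, rdim W x),
        is_natural theta /\ (forall x, eta x *m theta x = psi x)].

(* trace of the block map \hat R(g): the trace of R(g) if g is a loop, else 0 *)
Definition rtrace m n (A : 'M[C]_(m, n)) : C :=
  \sum_(i < m) \sum_(j < n) ((i : nat) == j)%:R * A i j.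

Definition character (R : rep) x y (g : ghom G x y) : C :=
  if x == y then rtrace (rmat R g) else 0.

Definition cf_dot (a b : forall x y, ghom G x y -> C) : C :=
  (#|obj G|%:R)^-1 *
  \sum_(x : obj G) ((#|ghom G x x|%:R)^-1 *
                    \sum_(g : ghom G x x) a x x g * (b x x g)^*).

End Groupoids.

From HB Require Import structures.
From mathcomp Require Import all_boot all_order all_algebra all_fingroup.
From Stdlib Require Import FunctionalExtensionality.
Import Order.TTheory GRing.Theory Num.Theory.

(* Fix an object x0. As H is wide and connected, Ind_H Tri is the permutation
   representation of G on the left cosets t H(x0,x0), t : x0 -> x, by left
   composition, and any two universal arrows are isomorphic, so the character
   of Ind_H Tri at a loop a counts the cosets fixed by a. Hence the inner
   product at an object x is the Burnside count of the orbits of the isotropy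
   group G(x,x) on pairs (t H(x0,x0), s K(x0,x0)), and these orbits correspond
   bijectively to the double cosets through (t H, s K) |-> H t^-1 s K. *)

Set Implicit Arguments. Unset Strict Implicit. Unset Printing Implicit Defensive.
Local Open Scope ring_scope.

Lemma card_imset_kernel (T U V : finType) (S : {set T}) (f : T -> U) (g : T -> V) :
  {in S &, forall p q, (f p == f q) = (g p == g q)} -> #|f @: S| = #|g @: S|.
Proof.
have card_graph (U' V' : finType) (f' : T -> U') (g' : T -> V') :
    {in S &, forall p q, f' p = f' q -> g' p = g' q} ->
    #|f' @: S| = #|[set (f' p, g' p) | p in S]|.
  move=> fg; rewrite -(card_in_imset (f := fst)) -?imset_comp //.
  by move=> _ _ /imsetP[p pS ->] /imsetP[q qS ->] /= e; rewrite e (fg p q).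
move=> fg; rewrite (card_graph _ _ f g) => [|p q pS qS /eqP]; last by rewrite fg // => /eqP.
rewrite (card_graph _ _ g f) => [|p q pS qS /eqP]; last by rewrite -fg // => /eqP.
by rewrite -(card_imset _ (can_inj swap_pairK)) -imset_comp.
Qed.

Lemma rtrace_mxtrace (C : numClosedFieldType) n (A : 'M[C]_n) : rtrace A = \tr A.
Proof.
apply: eq_bigr => i _; rewrite (bigD1 i) //= eqxx mul1r big1 ?addr0 // => j ji.
by rewrite eq_sym (inj_eq val_inj) (negbTE ji) mul0r.
Qed.

Section Groupoid.
Variable G : groupoid.

Lemma ginv_uniq x y (f : ghom G x y) (v : ghom G y x) : gcomp v f = gid x -> v = ginv f.
Proof. by move=> vf; rewrite -[v]gcompg1 -(gcompgV f) gcompA vf gcomp1g. Qed.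

Lemma ginvM x y z (g : ghom G y z) (f : ghom G x y) :
  ginv (gcomp g f) = gcomp (ginv f) (ginv g).
Proof.
symmetry; apply: ginv_uniq.
by rewrite gcompA -(gcompA (ginv f)) gcompVg gcompg1 gcompVg.
Qed.

Definition gcompS x y z (g : ghom G y z) (A : {set ghom G x y}) : {set ghom G x z} :=
  [set gcomp g t | t in A].

Lemma gcompSM x y z w (g : ghom G z w) (f : ghom G y z) (A : {set ghom G x y}) :
  gcompS (gcomp g f) A = gcompS g (gcompS f A).
Proof. by rewrite /gcompS -imset_comp; apply: eq_imset => t /=; rewrite gcompA. Qed.

Lemma gcomp1S x y (A : {set ghom G x y}) : gcompS (gid y) A = A.
Proof. by rewrite /gcompS (eq_imset (g := id)) ?imset_id // => t; rewrite gcomp1g. Qed.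

Section InducedUniqueness.
Variables (C : numClosedFieldType) (H : forall x y, {set ghom G x y}).

Lemma Ind_Tri_natural_id (I : rep G C) eta (theta : forall x, 'M[C]_(rdim I x, rdim I x)) :
  is_Ind_Tri H (I := I) eta -> is_natural theta -> (forall x, eta x *m theta x = eta x) ->
  forall x, theta x = 1%:M.
Proof.
case=> functorI natural_eta universal natural_theta theta_eta x.
have [lift [_ lift_unique]] := universal I functorI eta natural_eta.
have id_natural : is_natural (fun x => 1%:M : 'M[C]_(rdim I x)).
  by move=> y z g; rewrite mulmx1 mul1mx.
rewrite -(lift_unique theta) // (lift_unique (fun x => 1%:M)) //.
by split=> // y; rewrite mulmx1.
Qed.

Lemma Ind_Tri_rtrace (I1 I2 : rep G C) eta1 eta2 :
  is_Ind_Tri H (I := I1) eta1 -> is_Ind_Tri H (I := I2) eta2 ->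
  forall x (a : ghom G x x), rtrace (rmat I1 a) = rtrace (rmat I2 a).
Proof.
move=> ind1 ind2 x a; have [functor1 natural1 universal1] := ind1.
have [functor2 natural2 universal2] := ind2.
have [th [[natural_th th_eta] _]] := universal1 I2 functor2 eta2 natural2.
have [th' [[natural_th' th'_eta] _]] := universal2 I1 functor1 eta1 natural1.
have thK : th x *m th' x = 1%:M.
  apply: (Ind_Tri_natural_id (theta := fun y => th y *m th' y) ind1) => [y z g|y].
    by rewrite mulmxA natural_th -mulmxA natural_th' mulmxA.
  by rewrite mulmxA th_eta th'_eta.
have th'K : th' x *m th x = 1%:M.
  apply: (Ind_Tri_natural_id (theta := fun y => th' y *m th y) ind2) => [y z g|y].
    by rewrite mulmxA natural_th' -mulmxA natural_th mulmxA.
  by rewrite mulmxA th'_eta th_eta.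
rewrite !rtrace_mxtrace -[rmat I1 a]mulmx1 -thK mulmxA natural_th -mulmxA.
by rewrite mxtrace_mulC -mulmxA th'K mulmx1.
Qed.

End InducedUniqueness.

Section Subgroupoid.
Variables (O : {set obj G}) (H : forall x y, {set ghom G x y}).
Hypotheses (subH : is_subgroupoid O H) (wideH : wide O) (connH : connected O H).

Lemma subgroupoid1 x : gid x \in H x x.
Proof. by case: subH => _ H1 _ _; apply: H1; rewrite wideH inE. Qed.

Lemma subgroupoidM x y z (g : ghom G y z) (f : ghom G x y) :
  g \in H y z -> f \in H x y -> gcomp g f \in H x z.
Proof. by case: subH => _ _ HM _; apply: HM. Qed.

Lemma subgroupoidV x y (f : ghom G x y) : f \in H x y -> ginv f \in H y x.
Proof. by case: subH => _ _ _ HV; apply: HV. Qed.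

Lemma subgroupoid_hom x y : exists g : ghom G x y, g \in H x y.
Proof. by apply: connH; rewrite wideH inE. Qed.

Variable x0 : obj G.

Definition lcoset x (t : ghom G x0 x) := gcompS t (H x0 x0).
Definition lcosets x := [set lcoset t | t : ghom G x0 x].
Definition fixed_lcosets x (a : ghom G x x) := [set c in lcosets x | gcompS a c == c].

Lemma mem_lcoset x (t : ghom G x0 x) : t \in lcoset t.
Proof. by apply/imsetP; exists (gid x0); rewrite ?subgroupoid1 ?gcompg1. Qed.

Lemma lcoset_in x (t : ghom G x0 x) : lcoset t \in lcosets x.
Proof. exact: imset_f. Qed.

Lemma lcosetMr x (t : ghom G x0 x) h : h \in H x0 x0 -> lcoset (gcomp t h) = lcoset t.
Proof.
move=> hH; apply/setP => u; apply/imsetP/imsetP => [[k kH ->]|[k kH ->]].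
  by exists (gcomp h k); rewrite ?subgroupoidM // gcompA.
exists (gcomp (ginv h) k); first by rewrite subgroupoidM ?subgroupoidV.
by rewrite gcompA -(gcompA t) gcompgV gcompg1.
Qed.

Lemma gcompS_lcoset x y (g : ghom G x y) (t : ghom G x0 x) :
  gcompS g (lcoset t) = lcoset (gcomp g t).
Proof. by rewrite /lcoset gcompSM. Qed.

Lemma gcompS_lcosets x y (g : ghom G x y) c : c \in lcosets x -> gcompS g c \in lcosets y.
Proof. by case/imsetP => t _ ->; rewrite gcompS_lcoset lcoset_in. Qed.

Lemma lcoset_hom x (h : ghom G x0 x) : h \in H x0 x -> lcoset h = H x0 x.
Proof.
move=> hH; apply/setP => u; apply/imsetP/idP => [[k kH ->]|uH].
  exact: subgroupoidM.
exists (gcomp (ginv h) u); first by rewrite subgroupoidM ?subgroupoidV.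
by rewrite gcompA gcompgV gcomp1g.
Qed.

Lemma hom_in_lcosets x : H x0 x \in lcosets x.
Proof. by have [h hH] := subgroupoid_hom x0 x; rewrite -(lcoset_hom hH) lcoset_in. Qed.

Lemma gcompS_hom x y (h : ghom G x y) : h \in H x y -> gcompS h (H x0 x) = H x0 y.
Proof.
move=> hH; have [k kH] := subgroupoid_hom x0 x.
by rewrite -(lcoset_hom kH) gcompS_lcoset lcoset_hom // subgroupoidM.
Qed.

Section CosetRepresentation.
Variable C : numClosedFieldType.

Definition coset_val x (i : 'I_#|lcosets x|) : {set ghom G x0 x} := enum_val i.
Definition coset_index x (c : {set ghom G x0 x}) : 'I_#|lcosets x| :=
  enum_rank_in (hom_in_lcosets x) c.

Lemma coset_valP x (i : 'I_#|lcosets x|) : coset_val i \in lcosets x.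
Proof. exact: enum_valP. Qed.

Lemma coset_indexK x c : c \in lcosets x -> coset_val (coset_index c) = c.
Proof. exact: enum_rankK_in. Qed.

Lemma coset_valK x (i : 'I_#|lcosets x|) : coset_index (coset_val i) = i.
Proof. exact: enum_valK_in. Qed.

Lemma coset_valE x (i : 'I_#|lcosets x|) : exists t : ghom G x0 x, coset_val i = lcoset t.
Proof. by case/imsetP: (coset_valP i) => t _ ->; exists t. Qed.

Definition coset_rep : rep G C :=
  @Rep G C (fun x => #|lcosets x|)
    (fun x y g => \matrix_(i, j) (gcompS g (coset_val i) == coset_val j)%:R).

Definition coset_eta x : 'M[C]_(1, rdim coset_rep x) :=
  delta_mx (0 : 'I_1) (coset_index (H x0 x)).

Lemma row_coset_rep x y (g : ghom G x y) i :
  row i (rmat coset_rep g) = delta_mx (0 : 'I_1) (coset_index (gcompS g (coset_val i))).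
Proof.
apply/rowP => j; rewrite !mxE /=.
have /coset_indexK gcK := gcompS_lcosets g (coset_valP i).
congr (_ %:R); congr nat_of_bool.
by apply/eqP/eqP => [->|->]; rewrite ?coset_valK.
Qed.

Lemma delta_coset_rep x y (g : ghom G x y) c : c \in lcosets x ->
  delta_mx (0 : 'I_1) (coset_index c) *m rmat coset_rep g =
  delta_mx (0 : 'I_1) (coset_index (gcompS g c)).
Proof. by move=> cc; rewrite -rowE row_coset_rep coset_indexK. Qed.

Lemma coset_eta_lcoset x (t : ghom G x0 x) :
  coset_eta x0 *m rmat coset_rep t = delta_mx (0 : 'I_1) (coset_index (lcoset t)).
Proof. by rewrite delta_coset_rep ?hom_in_lcosets. Qed.

Lemma coset_rep_functor : is_functor coset_rep.
Proof.
split=> [x | x y z g f]; apply/row_matrixP => i.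
  by rewrite row_coset_rep gcomp1S coset_valK rowE mulmx1.
rewrite row_coset_rep row_mul row_coset_rep delta_coset_rep ?gcompS_lcosets ?coset_valP //.
by rewrite gcompSM.
Qed.

Lemma coset_eta_natural : is_natural_TriRes H coset_eta.
Proof.
by move=> x y h hH; rewrite mul1mx delta_coset_rep ?hom_in_lcosets ?gcompS_hom.
Qed.

Section UniversalArrow.
Variables (W : rep G C) (psi : forall x, 'M[C]_(1, rdim W x)).
Hypotheses (functorW : is_functor W) (natural_psi : is_natural_TriRes H psi).

Lemma psi_lcoset x (t u : ghom G x0 x) : u \in lcoset t ->
  psi x0 *m rmat W u = psi x0 *m rmat W t.
Proof.
case/imsetP => h hH ->; case: functorW => _ ->.
by rewrite mulmxA -natural_psi // mul1mx.
Qed.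

Definition coset_row x (c : {set ghom G x0 x}) : 'rV[C]_(rdim W x) :=
  if [pick t in c] is Some t then psi x0 *m rmat W t else 0.

Lemma coset_rowE x (t : ghom G x0 x) : coset_row (lcoset t) = psi x0 *m rmat W t.
Proof.
rewrite /coset_row; case: pickP => [u /psi_lcoset //|/(_ t)].
by rewrite mem_lcoset.
Qed.

Definition coset_lift x : 'M[C]_(rdim coset_rep x, rdim W x) :=
  \matrix_i coset_row (coset_val i).

Lemma coset_lift_natural : is_natural coset_lift.
Proof.
move=> x y g; apply/row_matrixP => i.
rewrite row_mul row_coset_rep -rowE rowK coset_indexK ?gcompS_lcosets ?coset_valP //.
rewrite row_mul rowK; have [t ->] := coset_valE i.
by rewrite gcompS_lcoset !coset_rowE; case: functorW => _ ->; rewrite mulmxA.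
Qed.

Lemma coset_lift_eta x : coset_eta x *m coset_lift x = psi x.
Proof.
rewrite -rowE rowK coset_indexK ?hom_in_lcosets //.
have [h hH] := subgroupoid_hom x0 x.
by rewrite -(lcoset_hom hH) coset_rowE -natural_psi // mul1mx.
Qed.

Lemma coset_lift_unique (theta : forall x, 'M[C]_(rdim coset_rep x, rdim W x)) :
  is_natural theta -> (forall x, coset_eta x *m theta x = psi x) -> theta = coset_lift.
Proof.
move=> natural_theta theta_eta; apply: functional_extensionality_dep => x.
apply/row_matrixP => i; have [t ti] := coset_valE i.
rewrite rowK ti coset_rowE rowE -(coset_valK i) ti -coset_eta_lcoset.
by rewrite -mulmxA natural_theta mulmxA theta_eta.
Qed.

End UniversalArrow.

Lemma coset_rep_Ind : is_Ind_Tri H coset_eta.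
Proof.
split=> [||W functorW psi natural_psi]; [exact: coset_rep_functor | exact: coset_eta_natural |].
exists (coset_lift psi); split.
  by split; [exact: coset_lift_natural | exact: coset_lift_eta].
move=> theta [natural_theta theta_eta].
by rewrite (coset_lift_unique functorW natural_psi natural_theta theta_eta).
Qed.

Lemma rtrace_coset_rep x (a : ghom G x x) :
  rtrace (rmat coset_rep a) = #|fixed_lcosets a|%:R.
Proof.
rewrite rtrace_mxtrace /mxtrace.
rewrite (eq_bigr (fun i => (gcompS a (coset_val i) == coset_val i)%:R)) => [|i _]; last first.
  by rewrite mxE.
rewrite /coset_val -(big_enum_val (fun c => (gcompS a c == c)%:R)) /=.
rewrite -sum1_card natr_sum big_mkcond [RHS]big_mkcond /=.
by apply: eq_bigr => c _; rewrite inE; case: (c \in _); case: (_ == _).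
Qed.

Lemma character_Ind_Tri (I : rep G C) eta : is_Ind_Tri H (I := I) eta ->
  forall x (a : ghom G x x), character I a = #|fixed_lcosets a|%:R.
Proof.
move=> indI x a; rewrite /character eqxx -rtrace_coset_rep.
exact: Ind_Tri_rtrace indI coset_rep_Ind x a.
Qed.

End CosetRepresentation.
End Subgroupoid.

Definition loop x : Type := ghom G x x.
HB.instance Definition _ x := Finite.on (loop x).

(* Loops multiply in the reverse order of composition, so that left composition
   [gcompS] is a right action in the sense of [act_morph]. *)
Definition loop_mul x (a b : loop x) : loop x := gcomp b a.

Lemma loop_mulA x : associative (@loop_mul x).
Proof. by move=> a b c; rewrite /loop_mul gcompA. Qed.

Lemma loop_mul1 x : left_id (gid x : loop x) (@loop_mul x).
Proof. by move=> a; rewrite /loop_mul gcompg1. Qed.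

Lemma loop_mulV x : left_inverse (gid x : loop x) (@ginv G x x) (@loop_mul x).
Proof. by move=> a; rewrite /loop_mul gcompgV. Qed.

HB.instance Definition _ x :=
  Finite_isGroup.Build (loop x) (@loop_mulA x) (@loop_mul1 x) (@loop_mulV x).

Section DoubleCosets.
Variables (OH OK : {set obj G}) (H K : forall x y, {set ghom G x y}).
Hypotheses (subH : is_subgroupoid OH H) (wideH : wide OH) (connH : connected OH H).
Hypotheses (subK : is_subgroupoid OK K) (wideK : wide OK) (connK : connected OK K).

Lemma dcosetP x y (g : ghom G x y) (u : mor G) :
  reflect (exists z w (h : ghom G y z) (k : ghom G w x),
             [/\ h \in H y z, k \in K w x & u = mkmor (gcomp h (gcomp g k))])
          (u \in dcoset H K g).
Proof.
rewrite inE; apply: (iffP existsP) => [[z /existsP[w /existsP[h /existsP[k]]]]|].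
  by case/and3P => hH kK /eqP ->; exists z, w, h, k.
case=> z [w [h [k [hH kK ->]]]]; exists z; apply/existsP; exists w.
by apply/existsP; exists h; apply/existsP; exists k; rewrite hH kK eqxx.
Qed.

Lemma mem_dcoset x y (g : ghom G x y) : mkmor g \in dcoset H K g.
Proof.
apply/dcosetP; exists y, x, (gid y), (gid x).
by rewrite (subgroupoid1 subH wideH) (subgroupoid1 subK wideK) gcompg1 gcomp1g.
Qed.

Lemma mem_dcoset_hom x y (g g' : ghom G x y) : mkmor g' \in dcoset H K g ->
  exists h k, [/\ h \in H y y, k \in K x x & g' = gcomp h (gcomp g k)].
Proof.
case/dcosetP => z [w [h [k [hH kK gg']]]].
have yz : y = z by have := congr1 (fun u => (tag u).2) gg'.
have xw : x = w by have := congr1 (fun u => (tag u).1) gg'.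
case: z / yz h hH gg' => h hH; case: w / xw k kK => k kK gg'.
by exists h, k; split=> //; apply: eq_from_Tagged gg'.
Qed.

Lemma dcoset_gcomp x y z w (g : ghom G x y) (h : ghom G y z) (k : ghom G w x) :
  h \in H y z -> k \in K w x -> dcoset H K (gcomp h (gcomp g k)) = dcoset H K g.
Proof.
move=> hH kK; apply/setP => u; apply/dcosetP/dcosetP.
  case=> z' [w' [h' [k' [hH' kK' ->]]]]; exists z', w', (gcomp h' h), (gcomp k k').
  by rewrite (subgroupoidM subH) // (subgroupoidM subK) // !gcompA.
case=> z' [w' [h' [k' [hH' kK' ->]]]].
exists z', w', (gcomp h' (ginv h)), (gcomp (ginv k) k').
rewrite (subgroupoidM subH) ?(subgroupoidV subH) //.
rewrite (subgroupoidM subK) ?(subgroupoidV subK) //; split=> //.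
by rewrite !gcompA -(gcompA h' (ginv h)) gcompVg gcompg1 -(gcompA _ k) gcompgV gcompg1.
Qed.

Section CosetPairs.
Variables (x0 x : obj G).

Definition coset_pairs := setX (lcosets H x0 x) (lcosets K x0 x).

Definition pair_act (p : {set ghom G x0 x} * {set ghom G x0 x}) (a : loop x) :=
  (gcompS a p.1, gcompS a p.2).

Lemma pair_act1 : pair_act^~ 1%g =1 id.
Proof. by case=> c d; rewrite /pair_act /= !gcomp1S. Qed.

Lemma pair_actM p : act_morph pair_act p.
Proof. by case: p => c d a b; rewrite /pair_act /= -!gcompSM. Qed.

Definition pair_action := TotalAction pair_act1 pair_actM.

Definition pair_dcoset (p : {set ghom G x0 x} * {set ghom G x0 x}) : {set mor G} :=
  if [pick t in p.1] is Some t then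
    if [pick s in p.2] is Some s then dcoset H K (gcomp (ginv t) s) else set0
  else set0.

Lemma pair_dcosetE (t s : ghom G x0 x) :
  pair_dcoset (lcoset H t, lcoset K s) = dcoset H K (gcomp (ginv t) s).
Proof.
rewrite /pair_dcoset /=; case: pickP => [_ /imsetP[h hH ->]|/(_ t)]; last first.
  by rewrite (mem_lcoset subH wideH).
case: pickP => [_ /imsetP[k kK ->]|/(_ s)]; last by rewrite (mem_lcoset subK wideK).
by rewrite ginvM -(dcoset_gcomp (gcomp (ginv t) s) (subgroupoidV subH hH) kK) !gcompA.
Qed.

Lemma mem_coset_pairs p : p \in coset_pairs -> exists t s, p = (lcoset H t, lcoset K s).
Proof.
by case: p => c d; rewrite inE /= => /andP[/imsetP[t _ ->] /imsetP[s _ ->]]; exists t, s.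
Qed.

Lemma imset_pair_dcoset : pair_dcoset @: coset_pairs = double_cosets H K.
Proof.
apply/setP => D; apply/imsetP/imsetP => [[p /mem_coset_pairs[t [s ->]] ->]|[u _ ->]].
  by rewrite pair_dcosetE; exists (mkmor (gcomp (ginv t) s)).
case: u => [[a b] g] /=.
have [k kK] := subgroupoid_hom wideK connK x0 a.
have [h hH] := subgroupoid_hom wideH connH b x0.
have [t _] := subgroupoid_hom wideH connH x0 x.
exists (lcoset H t, lcoset K (gcomp t (gcomp h (gcomp g k)))).
  by rewrite inE /= !lcoset_in.
by rewrite pair_dcosetE gcompA gcompVg gcomp1g (dcoset_gcomp g hH kK).
Qed.

(* If t'^-1 s' = h t^-1 s k, then a := t' h t^-1 moves (tH, sK) to (t'H, s'K). *)
Lemma pair_action_orbitE p q : p \in coset_pairs -> q \in coset_pairs ->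
  (q \in orbit pair_action setT p) = (pair_dcoset q == pair_dcoset p).
Proof.
move=> /mem_coset_pairs[t [s ->]] /mem_coset_pairs[t' [s' ->]].
apply/imsetP/eqP => [[a _ [-> ->]]|]; rewrite /= ?gcompS_lcoset !pair_dcosetE.
  by rewrite ginvM -gcompA (gcompA (ginv a)) gcompVg gcomp1g.
move=> same_dcoset.
have := mem_dcoset (gcomp (ginv t') s').
rewrite same_dcoset => /mem_dcoset_hom[h [k [hH kK ts'E]]].
exists (gcomp t' (gcomp h (ginv t))); rewrite ?inE // /pair_act /= !gcompS_lcoset.
have s'E : s' = gcomp t' (gcomp (ginv t') s') by rewrite gcompA gcompgV gcomp1g.
rewrite s'E ts'E !gcompA (lcosetMr subK _ kK).
by rewrite -(gcompA _ (ginv t) t) gcompVg gcompg1 (lcosetMr subH _ hH).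
Qed.

Lemma acts_coset_pairs : [acts setT, on coset_pairs | pair_action].
Proof.
apply/subsetP => a _; rewrite !inE; apply/subsetP => _ /mem_coset_pairs[t [s ->]].
by rewrite !inE /= !gcompS_lcoset !lcoset_in.
Qed.

Lemma card_orbits_coset_pairs :
  #|orbit pair_action setT @: coset_pairs| = #|double_cosets H K|.
Proof.
rewrite -imset_pair_dcoset; apply: card_imset_kernel => p q pS qS.
by rewrite (sameP eqP orbit_eqP) pair_action_orbitE.
Qed.

Lemma card_Fix_pair_action (a : loop x) :
  #|('Fix_(coset_pairs | pair_action)[a])%g| =
  (#|fixed_lcosets H x0 a| * #|fixed_lcosets K x0 a|)%N.
Proof.
rewrite -cardsX; apply: eq_card => -[c d].
rewrite !inE sub1set !inE /= /pair_act /= xpair_eqE.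
by case: (c \in _); case: (d \in _); case: (_ == c); case: (_ == d).
Qed.

Lemma sum_card_fixed_lcosets :
  (\sum_(a : ghom G x x) #|fixed_lcosets H x0 a| * #|fixed_lcosets K x0 a| =
   #|double_cosets H K| * #|ghom G x x|)%N.
Proof.
have loop_id : bijective (fun a : loop x => a : ghom G x x) by exists id.
have := Frobenius_Cauchy acts_coset_pairs.
rewrite card_orbits_coset_pairs cardsT (eq_bigr _ (fun a _ => card_Fix_pair_action a)).
move=> sum_Fix; apply: etrans (etrans _ sum_Fix) _; last by rewrite (bij_eq_card loop_id).
by rewrite (reindex _ (onW_bij _ loop_id)); apply: eq_bigl => a; rewrite inE.
Qed.

End CosetPairs.
End DoubleCosets.
End Groupoid.

Theorem corollary5p5 (C : numClosedFieldType) (G : groupoid)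
    (OH OK : {set obj G}) (H K : forall x y, {set ghom G x y}) :
  is_subgroupoid OH H -> wide OH -> connected OH H ->
  is_subgroupoid OK K -> wide OK -> connected OK K ->
  forall (IH : rep G C) (etaH : forall x, 'M[C]_(1, rdim IH x)),
  is_Ind_Tri H etaH ->
  forall (IK : rep G C) (etaK : forall x, 'M[C]_(1, rdim IK x)),
  is_Ind_Tri K etaK ->
  (#|double_cosets H K|)%:R = cf_dot (character IH) (character IK).
Proof.
move=> subH wideH connH subK wideK connK IH etaH indH IK etaK indK.
have /card_gt0P[x0 _] := obj_nonempty G.
have isotropy_dot x : (#|ghom G x x|%:R)^-1 *
    \sum_(a : ghom G x x) character IH a * (character IK a)^* = #|double_cosets H K|%:R.
  rewrite (eq_bigr (fun a => (#|fixed_lcosets H x0 a| * #|fixed_lcosets K x0 a|)%:R)).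
    rewrite -natr_sum (sum_card_fixed_lcosets subH wideH connH subK wideK connK).
    rewrite mulnC natrM mulKf // pnatr_eq0 -lt0n.
    by apply/card_gt0P; exists (gid x).
  move=> a _; rewrite (character_Ind_Tri subH wideH connH x0 indH).
  by rewrite (character_Ind_Tri subK wideK connK x0 indK) conjC_nat natrM.
rewrite /cf_dot (eq_bigr _ (fun x _ => isotropy_dot x)) sumr_const -[X in _ * X]mulr_natl.
by rewrite mulKf // pnatr_eq0 -lt0n; apply: obj_nonempty.
Qed.
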